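(* Let $R$ be an associative ring with identity and $M$ a left $R$-module which is projective in $\sigma[M]$. Let $\mu\colon\Lambda^{fi}(M)\to\Lambda^{fi}(M)$ be given by $\mu(N)=\sum\{K\in\Lambda^{fi}(M)\mid \mathcal{U}(K)\subseteq\mathcal{U}(N)\}$. Then for $N\in\Lambda^{fi}(M)$, $\mu(N)=N$ if and only if $N$ is semiprime in $M$ or $N=M$.
   Context: $\Lambda^{fi}(M)$ is the set of fully invariant submodules of $M$. For $N,L\leq M$, $N_ML=\sum\{f(N)\mid f\in\mathrm{Hom}_R(M,L)\}$. $LgSpec(M)$ is the set of submodules $P\neq M$ such that for all $N,L\in\Lambda^{fi}(M)$, $N_ML\subseteq P$ implies $N\subseteq P$ or $L\subseteq P$; for $N\in\Lambda^{fi}(M)$, $\mathcal{U}(N)=\{P\in LgSpec(M)\mid N\nsubseteq P\}$. A submodule $N\in\Lambda^{fi}(M)$ with $N\neq M$ is semiprime in $M$ if whenever $K\in\Lambda^{fi}(M)$ and $K_MK\subseteq N$, then $K\subseteq N$. *)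

From HB Require Import structures.
From mathcomp Require Import all_boot all_algebra.
Set Implicit Arguments. Unset Strict Implicit. Unset Printing Implicit Defensive.
Import GRing.Theory.
Local Open Scope ring_scope.

(* R : an associative ring with identity (pzRingType); left R-modules are lmodType R.
   Submodules are represented as predicates M -> Prop. *)

Section Modules.
Variable R : pzRingType.

Definition subset_ (M : lmodType R) (A B : M -> Prop) := forall x, A x -> B x.
Definition seteq_ (M : lmodType R) (A B : M -> Prop) := forall x, A x <-> B x.
Definition full_ (M : lmodType R) (A : M -> Prop) := forall x : M, A x.

Definition is_submod (M : lmodType R) (N : M -> Prop) : Prop :=
  [/\ N 0, (forall x y, N x -> N y -> N (x + y)) & (forall (r : R) x, N x -> N (r *: x))].

Definition sum_fam (M : lmodType R) (F : (M -> Prop) -> Prop) : M -> Prop :=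
  fun x => exists s : seq M,
    (forall y, y \in s -> exists K, F K /\ K y) /\ x = \sum_(y <- s) y.

Definition img (X Y : lmodType R) (f : X -> Y) (N : X -> Prop) : Y -> Prop :=
  fun y => exists x, N x /\ y = f x.

Definition fully_inv (M : lmodType R) (N : M -> Prop) : Prop :=
  is_submod N /\ forall f : M -> M, linear f -> subset_ (img f N) N.

(* N_M L = sum { f(N) | f in Hom_R(M, L) } *)
Definition prodM (M : lmodType R) (N L : M -> Prop) : M -> Prop :=
  sum_fam (fun K => exists f : M -> M,
     [/\ linear f, (forall x, L (f x)) & seteq_ K (img f N)]).

Definition LgSpec (M : lmodType R) (P : M -> Prop) : Prop :=
  [/\ is_submod P, ~ full_ P &
     forall N L, fully_inv N -> fully_inv L ->
       subset_ (prodM N L) P -> subset_ N P \/ subset_ L P].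

Definition U_ (M : lmodType R) (N : M -> Prop) : (M -> Prop) -> Prop :=
  fun P => LgSpec P /\ ~ subset_ N P.

Definition semiprime (M : lmodType R) (N : M -> Prop) : Prop :=
  [/\ fully_inv N, ~ full_ N &
     forall K, fully_inv K -> subset_ (prodM K K) N -> subset_ K N].

Definition mu (M : lmodType R) (N : M -> Prop) : M -> Prop :=
  sum_fam (fun K => fully_inv K /\ forall P, U_ K P -> U_ N P).

Definition M_generated (M Y : lmodType R) : Prop :=
  full_ (sum_fam (fun K : Y -> Prop => exists f : M -> Y,
            linear f /\ seteq_ K (img f (fun _ => True)))).

(* X in sigma[M]: X is isomorphic to a submodule of an M-generated module,
   i.e. X embeds (injective linear map) into an M-generated module. *)
Definition in_sigma (M X : lmodType R) : Prop :=
  exists (Y : lmodType R) (e : X -> Y), [/\ linear e, injective e & M_generated M Y].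

Definition proj_in_sigma (M : lmodType R) : Prop :=
  forall (X Y : lmodType R), in_sigma M X -> in_sigma M Y ->
  forall (g : X -> Y), linear g -> (forall y, exists x, g x = y) ->
  forall (f : M -> Y), linear f ->
  exists h : M -> X, linear h /\ forall m, g (h m) = f m.

End Modules.

From HB Require Import structures.
From mathcomp Require Import all_boot all_algebra.
From mathcomp Require Import boolp classical_sets.
Set Implicit Arguments. Unset Strict Implicit. Unset Printing Implicit Defensive.
Import GRing.Theory.
Local Open Scope ring_scope.

(* [N] is always below [mu N].  If [mu N = N <> M] and [K_M K <= N], every
   [P] of [LgSpec M] containing [N] contains [K], so [U(K) <= U(N)] and
   [K <= mu N = N]: [N] is semiprime.  Conversely, a semiprime [N] is cut out
   by [LgSpec M]: given [x] in [K] but not in [N], semiprimality produces a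
   sequence [x = s_0, s_(n+1) in <s_n>_M <s_n>] outside [N], where [<y>] is
   the fully invariant submodule generated by [y].  A fully invariant [A >= N]
   maximal among those avoiding the sequence (Zorn) lies in [LgSpec M]: if
   [B, C] are not below [A], then [B + A] and [C + A] contain some [s_k], and
   projectivity of [M] gives [(B + A)_M (C + A) <= B_M C + A], so
   [B_M C <= A] would put [s_(k+1)] in [A].  Hence [U(K) <= U(N)] forces
   [K <= N], i.e. [mu N <= N]. *)

Section SubmoduleType.
Variables (R : pzRingType) (M : lmodType R) (S : M -> Prop) (hS : is_submod S).

(* The dummy [let] makes the carrier depend on [hS], so that the module
   structure below can be found by canonical-structure inference. *)
Definition submod_mem : pred M := fun x => let _ := hS in `[< S x >].
Definition submod_type := {x : M | submod_mem x}.
HB.instance Definition _ := SubType.copy submod_type {x : M | submod_mem x}.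
HB.instance Definition _ := Choice.copy submod_type {x : M | submod_mem x}.

Lemma submod_mem_closed : subsemimod_closed submod_mem.
Proof.
case: hS => S0 SD SZ; split; [split|].
- exact/asboolP.
- by move=> x y /asboolP Sx /asboolP Sy; apply/asboolP/SD.
- by move=> a x /asboolP Sx; apply/asboolP/SZ.
Qed.

HB.instance Definition _ :=
  GRing.SubChoice_isSubLmodule.Build R M submod_mem submod_type submod_mem_closed.

Lemma submod_valP (u : submod_type) : S (val u).
Proof. exact/asboolP/(valP u). Qed.

Lemma submod_memP x : S x -> submod_mem x.
Proof. by move=> Sx; apply/asboolP. Qed.

End SubmoduleType.

Section SubmoduleSums.
Variables (R : pzRingType) (M : lmodType R).
Implicit Types (A B K L S : M -> Prop).

Lemma submod_sum S (s : seq M) : is_submod S ->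
  (forall y, y \in s -> S y) -> S (\sum_(y <- s) y).
Proof.
case=> S0 SD _; elim: s => [|y s IHs] Ss; first by rewrite big_nil.
rewrite big_cons; apply: SD; first by apply: Ss; rewrite inE eqxx.
by apply: IHs => z sz; apply: Ss; rewrite inE sz orbT.
Qed.

Lemma sum_fam_least (F : (M -> Prop) -> Prop) S : is_submod S ->
  (forall K, F K -> subset_ K S) -> subset_ (sum_fam F) S.
Proof.
move=> hS FS x [s [Fs ->]]; apply: submod_sum => // y /Fs [K [FK Ky]].
exact: FS FK _ Ky.
Qed.

Lemma sum_fam_mem (F : (M -> Prop) -> Prop) K x : F K -> K x -> sum_fam F x.
Proof.
move=> FK Kx; exists [:: x]; split; last by rewrite big_seq1.
by move=> y; rewrite inE => /eqP ->; exists K.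
Qed.

Lemma sum_fam_mono (F G : (M -> Prop) -> Prop) :
  (forall K, F K -> exists K', G K' /\ subset_ K K') ->
  subset_ (sum_fam F) (sum_fam G).
Proof.
move=> FG x [s [Fs ->]]; exists s; split => // y /Fs [K [FK Ky]].
by have [K' [GK' KK']] := FG K FK; exists K'; split => //; apply: KK'.
Qed.

Lemma prodM_subr K L : is_submod L -> subset_ (prodM K L) L.
Proof.
move=> hL; apply: sum_fam_least => // K0 [f [_ fL eK]] x /eK [y [_ ->]].
exact: fL.
Qed.

Lemma prodM_mono K K' L L' : subset_ K K' -> subset_ L L' ->
  subset_ (prodM K L) (prodM K' L').
Proof.
move=> KK' LL'; apply: sum_fam_mono => K0 [f [lf fL eK]].
exists (img f K'); split; first by exists f; split => // x; apply/LL'/fL.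
by move=> x /eK [y [Ky ->]]; exists y; split => //; apply: KK'.
Qed.

Definition addsm A B : M -> Prop :=
  fun x => exists a b, [/\ A a, B b & x = a + b].

Lemma addsm_submod A B : is_submod A -> is_submod B -> is_submod (addsm A B).
Proof.
case=> A0 AD AZ [B0 BD BZ]; split.
- by exists 0, 0; rewrite addr0.
- move=> _ _ [a [b [Aa Bb ->]]] [a' [b' [Aa' Bb' ->]]].
  by exists (a + a'), (b + b'); split; auto; rewrite addrACA.
- move=> r _ [a [b [Aa Bb ->]]]; exists (r *: a), (r *: b); split; auto.
  by rewrite scalerDr.
Qed.

Lemma addsm_subr A B : is_submod A -> subset_ B (addsm A B).
Proof. by case=> A0 _ _ x Bx; exists 0, x; rewrite add0r. Qed.

Lemma addsm_subl A B : is_submod B -> subset_ A (addsm A B).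
Proof. by case=> B0 _ _ x Ax; exists x, 0; rewrite addr0. Qed.

Lemma addsm_fully_inv A B : fully_inv A -> fully_inv B -> fully_inv (addsm A B).
Proof.
case=> hA fA [hB fB]; split; first exact: addsm_submod.
move=> f lf _ [_ [[a [b [Aa Bb ->]]] ->]].
exists (f a), (f b); split.
- exact: fA f lf _ (ex_intro _ a (conj Aa erefl)).
- exact: fB f lf _ (ex_intro _ b (conj Bb erefl)).
- exact: (GRing.semilinear_linear lf).2.
Qed.

End SubmoduleSums.

Section Projectivity.
Variables (R : pzRingType) (M : lmodType R).
Implicit Types (A B P S : M -> Prop).

Lemma M_generated_self : M_generated M M.
Proof.
move=> x; exists [:: x]; split; last by rewrite big_seq1.
move=> y; rewrite inE => /eqP ->; exists (img id (fun _ => True)); split.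
  by exists id; split => // a u v.
by exists x.
Qed.

Lemma M_generated_pair : M_generated M (M * M)%type.
Proof.
move=> [x y]; exists [:: (x, 0); (0, y)]; split; last first.
  by rewrite big_cons big_seq1 /=; congr (_, _); rewrite ?addr0 ?add0r.
move=> z; rewrite !inE => /orP [] /eqP ->.
- exists (img (fun m : M => (m, 0 : M)) (fun _ => True)); split; last by exists x.
  exists (fun m : M => (m, 0 : M)); split => // a u v.
  by change ((a *: u + v, 0) = (a *: u + v, a *: (0 : M) + 0) :> M * M);
    rewrite scaler0 addr0.
- exists (img (fun m : M => (0 : M, m)) (fun _ => True)); split; last by exists y.
  exists (fun m : M => (0 : M, m)); split => // a u v.
  by change ((0, a *: u + v) = (a *: (0 : M) + 0, a *: u + v) :> M * M);
    rewrite scaler0 addr0.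
Qed.

Lemma in_sigma_submod S (hS : is_submod S) : in_sigma M (submod_type hS).
Proof.
exists M, val; split; last exact: M_generated_self; last exact: val_inj.
by move=> a u v; rewrite linearP.
Qed.

Lemma in_sigma_submod_pair B P (hB : is_submod B) (hP : is_submod P) :
  in_sigma M (submod_type hB * submod_type hP)%type.
Proof.
exists (M * M)%type, (fun z => (val z.1, val z.2)); split => //.
- by move=> [u1 u2] [v1 v2] /= [/val_inj -> /val_inj ->].
- exact: M_generated_pair.
Qed.

(* Lift [f] along the surjection [B x P -> B + P], [(b, p) |-> b + p]. *)
Lemma proj_split_addsm B P (f : M -> M) : proj_in_sigma M ->
  is_submod B -> is_submod P -> linear f -> (forall x, addsm B P (f x)) ->
  exists g h : M -> M, [/\ linear g, (forall x, B (g x)),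
     (forall x, P (h x)) & forall x, f x = g x + h x].
Proof.
move=> projM hB hP lf fBP; have hBP := addsm_submod hB hP.
pose X := (submod_type hB * submod_type hP)%type.
pose Y := submod_type hBP.
have sumP (z : X) : submod_mem hBP (val z.1 + val z.2).
  apply: submod_memP; exists (val z.1), (val z.2).
  by split => //; apply: submod_valP.
pose sum_map : X -> Y := fun z => exist (submod_mem hBP) _ (sumP z).
have lin_sum : linear sum_map.
  by move=> a u v; apply: val_inj => /=; rewrite scalerDr addrACA.
have sum_onto (y : Y) : exists z : X, sum_map z = y.
  have [b [p [Bb Pp e]]] := submod_valP y.
  exists (exist (submod_mem hB) b (submod_memP hB Bb),
          exist (submod_mem hP) p (submod_memP hP Pp)).
  by apply: val_inj => /=; rewrite e.
pose fY : M -> Y :=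
  fun m => exist (submod_mem hBP) (f m) (submod_memP hBP (fBP m)).
have lin_fY : linear fY by move=> a u v; apply: val_inj => /=; rewrite lf.
have [k [lk sum_k]] := projM X Y (in_sigma_submod_pair hB hP)
  (in_sigma_submod hBP) sum_map lin_sum sum_onto fY lin_fY.
exists (fun m => val (k m).1), (fun m => val (k m).2); split.
- by move=> a u v /=; rewrite lk.
- by move=> x; apply: submod_valP.
- by move=> x; apply: submod_valP.
- by move=> x; rewrite -[f x]/(val (fY x)) -sum_k.
Qed.

Lemma prodM_addsm_sub A B P : proj_in_sigma M -> is_submod A -> is_submod B ->
  fully_inv P -> subset_ (prodM A B) P ->
  subset_ (prodM (addsm A P) (addsm B P)) P.
Proof.
move=> projM hA hB [hP fP] ABP.
apply: sum_fam_least => // K [f [lf fBP eK]] _ /eK [_ [[a [p [Aa Pp ->]]] ->]].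
have [g [h [lg gB hP' fgh]]] := proj_split_addsm projM hB hP lf fBP.
have [_ PD _] := hP.
rewrite (GRing.semilinear_linear lf).2 fgh.
apply: (PD); last exact: fP f lf _ (ex_intro _ p (conj Pp erefl)).
apply: PD (hP' a); apply: ABP.
apply: (sum_fam_mem (K := img g A)); last by exists a.
by exists g; split => // z.
Qed.

End Projectivity.

Section PrimeAvoidance.
Variables (R : pzRingType) (M : lmodType R).
Implicit Types (A B C N K Q S : M -> Prop).
Local Open Scope classical_set_scope.

Definition fi_gen (x : M) : M -> Prop :=
  fun y => forall Q, fully_inv Q -> Q x -> Q y.

Lemma fi_gen_fully_inv x : fully_inv (fi_gen x).
Proof.
split; first split.
- by move=> Q [[Q0 _ _] _].
- move=> u v xu xv Q fiQ Qx; have [[_ QD _] _] := fiQ.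
  by apply: QD; [exact: xu | exact: xv].
- by move=> r u xu Q fiQ Qx; have [[_ _ QZ] _] := fiQ; apply: QZ; exact: xu.
move=> f lf _ [u [xu ->]] Q [hQ fQ] Qx.
by apply: fQ f lf _ (ex_intro _ u (conj (xu Q (conj hQ fQ) Qx) erefl)).
Qed.

Lemma fi_gen_self x : fi_gen x x.
Proof. by []. Qed.

Lemma fi_gen_min x Q : fully_inv Q -> Q x -> subset_ (fi_gen x) Q.
Proof. by move=> fiQ Qx y; apply. Qed.

Lemma fi_gen_antitone (s : nat -> M) i k :
  (forall n, fi_gen (s n) (s n.+1)) -> (i <= k)%N ->
  subset_ (fi_gen (s k)) (fi_gen (s i)).
Proof.
move=> ss /subnK <-; elim: (k - i)%N => [|d IHd] y //.
by rewrite addSn => /(fi_gen_min (fi_gen_fully_inv _) (ss _)); apply: IHd.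
Qed.

Lemma semiprime_step N x : semiprime N -> ~ N x ->
  exists2 y, ~ N y & prodM (fi_gen x) (fi_gen x) y.
Proof.
case=> _ _ spN Nx; apply: contrapT => noy; apply: Nx.
apply: (spN (fi_gen x) (fi_gen_fully_inv x)); last exact: fi_gen_self.
by move=> y xxy; apply: contrapT => Ny; apply: noy; exists y.
Qed.

Lemma semiprime_sequence N x : semiprime N -> ~ N x ->
  exists s : nat -> M, [/\ s 0%N = x, forall n, ~ N (s n) &
    forall n, prodM (fi_gen (s n)) (fi_gen (s n)) (s n.+1)].
Proof.
move=> spN Nx.
have step (u : {y | ~ N y}) :
    {v : {y | ~ N y} | prodM (fi_gen (sval u)) (fi_gen (sval u)) (sval v)}.
  apply: cid; have [y Ny uy] := semiprime_step spN (svalP u).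
  by exists (exist _ y Ny).
pose s n := iter n (fun u => sval (step u)) (exist _ x Nx).
exists (fun n => sval (s n)); split => // n; first exact: svalP (s n).
exact: svalP (step (s n)).
Qed.

Definition avoids S A := forall x, S x -> ~ A x.

Lemma bigcup_chain_fully_inv (F : set (set M)) :
  (forall X x, F X -> X x -> fully_inv X) -> total_on F subset ->
  (exists x, (\bigcup_(X in F) X) x) -> fully_inv (\bigcup_(X in F) X).
Proof.
move=> Ffi Ftot [x0 [X0 FX0 X0x0]]; split; first split.
- by exists X0 => //; have [[] ] := Ffi _ _ FX0 X0x0.
- move=> u v [X FX Xu] [Y FY Yv]; have [XY|YX] := Ftot X Y FX FY.
  + exists Y => //; have [[_ YD _] _] := Ffi _ _ FY Yv.
    exact: YD (XY _ Xu) Yv.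
  + exists X => //; have [[_ XD _] _] := Ffi _ _ FX Xu.
    exact: XD Xu (YX _ Yv).
- move=> r u [X FX Xu]; exists X => //.
  by have [[_ _ XZ] _] := Ffi _ _ FX Xu; apply: XZ.
- move=> f lf _ [u [[X FX Xu] ->]]; exists X => //.
  have [_ fX] := Ffi _ _ FX Xu.
  exact: fX f lf _ (ex_intro _ u (conj Xu erefl)).
Qed.

Lemma exists_max_avoiding N S : fully_inv N -> avoids S N ->
  exists A, [/\ fully_inv A, subset_ N A, avoids S A &
    forall B, fully_inv B -> avoids S B -> subset_ A B -> subset_ B A].
Proof.
move=> fiN SN; pose Q A := [/\ fully_inv A, subset_ N A & avoids S A].
have chainQ (F : set (set M)) : F `<=` (fun A => A = set0 \/ Q A) ->
    total_on F subset -> (fun A => A = set0 \/ Q A) (\bigcup_(X in F) X).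
  move=> FQ Ftot.
  have QF X x : F X -> X x -> Q X.
    by move=> FX Xx; case: (FQ _ FX) => // X0; rewrite X0 in Xx.
  have [Fx|noF] := pselect (exists x, (\bigcup_(X in F) X) x); last first.
    by left; apply/seteqP; split => // x Fx; apply: noF; exists x.
  have [x [X FX Xx]] := Fx; right; split.
  - by apply: bigcup_chain_fully_inv Ftot Fx => Y y FY Yy; case: (QF Y y FY Yy).
  - by move=> y Ny; exists X => //; case: (QF X x FX Xx) => _ NX _; apply: NX.
  - by move=> y Sy [Y FY Yy]; case: (QF Y y FY Yy) => _ _ SY; apply: SY Sy Yy.
have [A [QA maxA]] := Zorn_bigcup chainQ.
have {QA} [fiA NA SA] : Q A.
  case: QA => // A0; exfalso; apply: (maxA N); last by right; split.
  split; first by rewrite A0.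
  by have [[N0 _ _] _] := fiN; move=> /(_ 0 N0); rewrite A0.
exists A; split => // B fiB SB AB; apply: contrapT => BA.
by apply: (maxA B); [split | right; split => // y /NA /AB].
Qed.

Lemma max_avoiding_LgSpec (s : nat -> M) A : proj_in_sigma M ->
  (forall n, prodM (fi_gen (s n)) (fi_gen (s n)) (s n.+1)) ->
  fully_inv A -> avoids (range s) A ->
  (forall B, fully_inv B -> avoids (range s) B -> subset_ A B -> subset_ B A) ->
  LgSpec A.
Proof.
move=> projM ss fiA sA maxA; have [hA _] := fiA.
have ss' n : fi_gen (s n) (s n.+1).
  exact: prodM_subr (fi_gen_fully_inv _).1 _ (ss n).
split => // [fullA|B C fiB fiC BCA].
  by apply: (sA (s 0%N)); [exists 0%N | exact: fullA].
apply: contrapT => /not_orP [BA CA].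
have meets B' : fully_inv B' -> ~ subset_ B' A -> exists n, addsm B' A (s n).
  move=> fiB' B'A; apply: contrapT => noS; apply: B'A => x B'x.
  apply: (maxA _ (addsm_fully_inv fiB' fiA)); last exact: addsm_subl hA _ B'x.
  - by move=> _ [n _ <-] B'An; apply: noS; exists n.
  - exact: addsm_subr fiB'.1.
have [n Bn] := meets B fiB BA; have [m Cm] := meets C fiC CA.
pose k := maxn n m.
have genB : subset_ (fi_gen (s k)) (addsm B A).
  move=> y /(fi_gen_antitone ss' (leq_maxl n m)).
  exact: fi_gen_min (addsm_fully_inv fiB fiA) Bn y.
have genC : subset_ (fi_gen (s k)) (addsm C A).
  move=> y /(fi_gen_antitone ss' (leq_maxr n m)).
  exact: fi_gen_min (addsm_fully_inv fiC fiA) Cm y.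
apply: (sA (s k.+1)); first by exists k.+1.
apply: (prodM_addsm_sub projM fiB.1 fiC.1 fiA BCA).
exact: prodM_mono genB genC _ (ss k).
Qed.

Lemma semiprime_LgSpec_separation N K : proj_in_sigma M -> semiprime N ->
  fully_inv K -> ~ subset_ K N ->
  exists P, [/\ LgSpec P, subset_ N P & ~ subset_ K P].
Proof.
move=> projM spN fiK KN.
have [x Kx Nx] : exists2 x, K x & ~ N x.
  apply: contrapT => noX; apply: KN => x Kx.
  by apply: contrapT => Nx; apply: noX; exists x.
have [s [s0 sN ss]] := semiprime_sequence spN Nx.
have [fiN _ _] := spN.
have sN' : avoids (range s) N by move=> _ [n _ <-]; exact: sN.
have [A [fiA NA sA maxA]] := exists_max_avoiding fiN sN'.
exists A; split => //; first exact: max_avoiding_LgSpec projM ss fiA sA maxA.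
by move=> KA; apply: (sA x); [exists 0%N | exact: KA].
Qed.

End PrimeAvoidance.

Section FixedPointsOfMu.
Variables (R : pzRingType) (M : lmodType R).
Implicit Types (N : M -> Prop).

Lemma sub_mu N : fully_inv N -> subset_ N (mu N).
Proof. by move=> fiN x Nx; apply: (sum_fam_mem (K := N)). Qed.

Lemma mu_sub_semiprime N : proj_in_sigma M -> semiprime N -> subset_ (mu N) N.
Proof.
move=> projM spN; have [[hN _] _ _] := spN.
apply: sum_fam_least => // K [fiK UKN] y Ky; apply: contrapT => Ny.
have [P [LP NP KP]] :=
  semiprime_LgSpec_separation projM spN fiK (fun KN => Ny (KN y Ky)).
by have [_ []] := UKN P (conj LP KP).
Qed.

Lemma mu_fixed_semiprime N : fully_inv N -> seteq_ (mu N) N -> ~ full_ N ->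
  semiprime N.
Proof.
move=> fiN muN NM; split => // K fiK KKN x Kx; apply/muN.
apply: (sum_fam_mem (K := K)) Kx; split => // P [LP KP]; split => // NP.
have [_ _ primeP] := LP.
have KKP : subset_ (prodM K K) P by move=> y /KKN /NP.
by case: (primeP _ _ fiK fiK KKP).
Qed.

End FixedPointsOfMu.

Theorem proposition4p24 (R : pzRingType) (M : lmodType R) :
  proj_in_sigma M ->
  forall N : M -> Prop, fully_inv N ->
    (seteq_ (mu N) N <-> semiprime N \/ full_ N).
Proof.
move=> projM N fiN; split => [muN | [spN | fullN] x].
- have [fullN | NM] := pselect (full_ N); [by right | left].
  exact: mu_fixed_semiprime.
- by split; [exact: mu_sub_semiprime | exact: sub_mu].
- by split => _; [exact: fullN | exact: sub_mu].
Qed.
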